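(* Let $v\ge2$ and $M,N\in{\cal I}_v$ with $N=N_1+N_2$, where $N_1=\beta M$ for some $\beta\in\mathbb R$ and $M\perp N_2$ with respect to the scalar product $(x,y):=\mathrm{Re}(xy^* )$. Then $$[e^M,e^N]=2\,\frac{\sin|M|}{|M|}\,\frac{\sin|N|}{|N|}\,MN_2 .$$
   Context: ${\cal A}_v$ is the real Cayley-Dickson algebra of dimension $2^v$ (iterated doubling of $\mathbb R$; ${\cal A}_2=\mathbb H$), $z^*$ is conjugation, $\mathrm{Re}(z)=(z+z^* )/2$, $|z|=(zz^* )^{1/2}$, and ${\cal I}_v=\{z\in{\cal A}_v:\mathrm{Re}(z)=0\}$. For $M\in{\cal I}_v$, $e^M=\cos|M|+\frac{\sin|M|}{|M|}M$ (with $\frac{\sin|M|}{|M|}:=1$ when $M=0$). $[a,b]:=ab-ba$. *)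

From Stdlib Require Import Reals.
Open Scope R_scope.

(* Real Cayley-Dickson algebra A_v of dimension 2^v, built by iterated
   doubling: A_0 = R, A_(v+1) = A_v x A_v with
     (a,b) + (c,d) = (a+c, b+d)
     (a,b)(c,d)    = (ac - conj(d) b, d a + b conj(c))
     (a,b)^*       = (conj a, -b). *)
Fixpoint CD (v : nat) : Type :=
  match v with O => R | S w => (CD w * CD w)%type end.

Fixpoint cd_real (v : nat) : R -> CD v :=
  match v return R -> CD v with
  | O => fun r => r
  | S w => fun r => (cd_real w r, cd_real w 0)
  end.

Fixpoint cd_add (v : nat) : CD v -> CD v -> CD v :=
  match v return CD v -> CD v -> CD v with
  | O => Rplus
  | S w => fun x y => (cd_add w (fst x) (fst y), cd_add w (snd x) (snd y))
  end.

Fixpoint cd_opp (v : nat) : CD v -> CD v :=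
  match v return CD v -> CD v with
  | O => Ropp
  | S w => fun x => (cd_opp w (fst x), cd_opp w (snd x))
  end.

Definition cd_sub (v : nat) (x y : CD v) : CD v := cd_add v x (cd_opp v y).

Fixpoint cd_scale (v : nat) : R -> CD v -> CD v :=
  match v return R -> CD v -> CD v with
  | O => Rmult
  | S w => fun r x => (cd_scale w r (fst x), cd_scale w r (snd x))
  end.

Fixpoint cd_conj (v : nat) : CD v -> CD v :=
  match v return CD v -> CD v with
  | O => fun x => x
  | S w => fun x => (cd_conj w (fst x), cd_opp w (snd x))
  end.

Fixpoint cd_mul (v : nat) : CD v -> CD v -> CD v :=
  match v return CD v -> CD v -> CD v with
  | O => Rmult
  | S w => fun x y =>
      let a := fst x in let b := snd x in let c := fst y in let d := snd y in
      (cd_sub w (cd_mul w a c) (cd_mul w (cd_conj w d) b),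
       cd_add w (cd_mul w d a) (cd_mul w b (cd_conj w c)))
  end.

(* Real part Re(z) = (z + z^* )/2, which is a real scalar; here its real value:
   the first (real) coordinate of z. *)
Fixpoint cd_re (v : nat) : CD v -> R :=
  match v return CD v -> R with
  | O => fun x => x
  | S w => fun x => cd_re w (fst x)
  end.

Definition cd_norm (v : nat) (z : CD v) : R := sqrt (cd_re v (cd_mul v z (cd_conj v z))).

Definition cd_dot (v : nat) (x y : CD v) : R := cd_re v (cd_mul v x (cd_conj v y)).

Definition cd_imag (v : nat) (z : CD v) : Prop := cd_re v z = 0.

Definition sinc (t : R) : R := if Req_EM_T t 0 then 1 else sin t / t.

Definition cd_exp (v : nat) (M : CD v) : CD v :=
  cd_add v (cd_real v (cos (cd_norm v M))) (cd_scale v (sinc (cd_norm v M)) M).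

Definition cd_comm (v : nat) (a b : CD v) : CD v :=
  cd_sub v (cd_mul v a b) (cd_mul v b a).

From Stdlib Require Import Reals Lra.
Open Scope R_scope.

(* Since e^M = cos|M| + sinc|M| M and real scalars are central,
   [e^M, e^N] = sinc|M| sinc|N| [M, N], and [M, N] = [M, N_2] because
   [M, M] = 0.  For imaginary x, y one has x^* = -x, so
   2 Re(x y^* ) = x y^* + y x^* = -(x y + y x): orthogonal imaginary elements
   anticommute, whence [M, N_2] = 2 M N_2. *)

Lemma cd_add_comm {v} (x y : CD v) : cd_add v x y = cd_add v y x.
Proof. induction v as [|w IH]; simpl; [ring | f_equal; apply IH]. Qed.

Lemma cd_add_assoc {v} (x y z : CD v) :
  cd_add v x (cd_add v y z) = cd_add v (cd_add v x y) z.
Proof. induction v as [|w IH]; simpl; [ring | f_equal; apply IH]. Qed.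

Lemma cd_add_0_l {v} (x : CD v) : cd_add v (cd_real v 0) x = x.
Proof.
  induction v as [|w IH]; simpl; [ring |].
  destruct x; simpl; f_equal; apply IH.
Qed.

Lemma cd_add_0_r {v} (x : CD v) : cd_add v x (cd_real v 0) = x.
Proof. rewrite cd_add_comm; apply cd_add_0_l. Qed.

Lemma cd_add_opp_r {v} (x : CD v) : cd_add v x (cd_opp v x) = cd_real v 0.
Proof. induction v as [|w IH]; simpl; [ring | f_equal; apply IH]. Qed.

Lemma cd_add_opp_l {v} (x : CD v) : cd_add v (cd_opp v x) x = cd_real v 0.
Proof. rewrite cd_add_comm; apply cd_add_opp_r. Qed.

Lemma cd_add_opp_r_uniq {v} (x y : CD v) :
  cd_add v x y = cd_real v 0 -> y = cd_opp v x.
Proof.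
  intros Hxy.
  rewrite <- (cd_add_0_l y), <- (cd_add_opp_l x), <- cd_add_assoc, Hxy.
  apply cd_add_0_r.
Qed.

Lemma cd_add_add_swap_middle {v} (a b c d : CD v) :
  cd_add v (cd_add v a b) (cd_add v c d) = cd_add v (cd_add v a c) (cd_add v b d).
Proof.
  rewrite <- !cd_add_assoc; f_equal.
  rewrite !cd_add_assoc; f_equal; apply cd_add_comm.
Qed.

Lemma cd_opp_involutive {v} (x : CD v) : cd_opp v (cd_opp v x) = x.
Proof.
  induction v as [|w IH]; simpl; [ring |].
  destruct x; simpl; f_equal; apply IH.
Qed.

Lemma cd_opp_add_distr {v} (x y : CD v) :
  cd_opp v (cd_add v x y) = cd_add v (cd_opp v x) (cd_opp v y).
Proof. induction v as [|w IH]; simpl; [ring | f_equal; apply IH]. Qed.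

Lemma cd_opp_real {v} (r : R) : cd_opp v (cd_real v r) = cd_real v (- r).
Proof.
  revert r; induction v as [|w IH]; intros r; simpl; [ring |].
  rewrite !IH, Ropp_0; reflexivity.
Qed.

Lemma cd_opp_eq_scale_m1 {v} (x : CD v) : cd_opp v x = cd_scale v (-1) x.
Proof. induction v as [|w IH]; simpl; [ring | f_equal; apply IH]. Qed.

Lemma cd_scale_add_distr_l {v} (r : R) (x y : CD v) :
  cd_scale v r (cd_add v x y) = cd_add v (cd_scale v r x) (cd_scale v r y).
Proof. induction v as [|w IH]; simpl; [ring | f_equal; apply IH]. Qed.

Lemma cd_scale_add_distr_r {v} (r s : R) (x : CD v) :
  cd_scale v (r + s) x = cd_add v (cd_scale v r x) (cd_scale v s x).
Proof. induction v as [|w IH]; simpl; [ring | f_equal; apply IH]. Qed.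

Lemma cd_scale_assoc {v} (r s : R) (x : CD v) :
  cd_scale v r (cd_scale v s x) = cd_scale v (r * s) x.
Proof. induction v as [|w IH]; simpl; [ring | f_equal; apply IH]. Qed.

Lemma cd_scale_1 {v} (x : CD v) : cd_scale v 1 x = x.
Proof.
  induction v as [|w IH]; simpl; [ring |].
  destruct x; simpl; f_equal; apply IH.
Qed.

Lemma cd_scale_0_l {v} (x : CD v) : cd_scale v 0 x = cd_real v 0.
Proof. induction v as [|w IH]; simpl; [ring | f_equal; apply IH]. Qed.

Lemma cd_scale_real {v} (r s : R) :
  cd_scale v r (cd_real v s) = cd_real v (r * s).
Proof.
  revert s; induction v as [|w IH]; intros s; simpl; [ring |].
  rewrite !IH, Rmult_0_r; reflexivity.
Qed.

Lemma cd_scale_opp {v} (r : R) (x : CD v) :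
  cd_scale v r (cd_opp v x) = cd_opp v (cd_scale v r x).
Proof.
  rewrite !cd_opp_eq_scale_m1, !cd_scale_assoc, Rmult_comm; reflexivity.
Qed.

Lemma cd_conj_add {v} (x y : CD v) :
  cd_conj v (cd_add v x y) = cd_add v (cd_conj v x) (cd_conj v y).
Proof.
  induction v as [|w IH]; simpl; [ring |].
  rewrite IH, cd_opp_add_distr; reflexivity.
Qed.

Lemma cd_conj_scale {v} (r : R) (x : CD v) :
  cd_conj v (cd_scale v r x) = cd_scale v r (cd_conj v x).
Proof.
  induction v as [|w IH]; simpl; [ring |].
  rewrite IH, cd_scale_opp; reflexivity.
Qed.

Lemma cd_conj_opp {v} (x : CD v) : cd_conj v (cd_opp v x) = cd_opp v (cd_conj v x).
Proof. rewrite !cd_opp_eq_scale_m1; apply cd_conj_scale. Qed.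

Lemma cd_conj_involutive {v} (x : CD v) : cd_conj v (cd_conj v x) = x.
Proof.
  induction v as [|w IH]; simpl; [reflexivity |].
  destruct x; simpl; rewrite IH, cd_opp_involutive; reflexivity.
Qed.

Lemma cd_conj_real {v} (r : R) : cd_conj v (cd_real v r) = cd_real v r.
Proof.
  revert r; induction v as [|w IH]; intros r; simpl; [ring |].
  rewrite IH, cd_opp_real, Ropp_0; reflexivity.
Qed.

(* The doubling formula for the product mixes left and right factors, so each
   two-sided property is proved as a conjunction by a single induction. *)
Lemma cd_mul_real {v} (r : R) (x : CD v) :
  cd_mul v (cd_real v r) x = cd_scale v r x /\
  cd_mul v x (cd_real v r) = cd_scale v r x.
Proof.
  revert r; induction v as [|w IH]; intros r; simpl; [split; ring |].
  destruct x as [a b]; simpl; unfold cd_sub.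
  rewrite !cd_conj_real.
  repeat rewrite (proj1 (IH _ _)); repeat rewrite (proj2 (IH _ _)).
  rewrite !cd_scale_0_l, cd_opp_real, Ropp_0, !cd_add_0_r, !cd_add_0_l.
  split; reflexivity.
Qed.

Lemma cd_mul_real_l {v} (r : R) (x : CD v) : cd_mul v (cd_real v r) x = cd_scale v r x.
Proof. apply cd_mul_real. Qed.

Lemma cd_mul_real_r {v} (r : R) (x : CD v) : cd_mul v x (cd_real v r) = cd_scale v r x.
Proof. apply cd_mul_real. Qed.

Lemma cd_mul_add_distr {v} (x y z : CD v) :
  cd_mul v (cd_add v x y) z = cd_add v (cd_mul v x z) (cd_mul v y z) /\
  cd_mul v z (cd_add v x y) = cd_add v (cd_mul v z x) (cd_mul v z y).
Proof.
  induction v as [|w IH]; simpl; [split; ring |].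
  destruct x as [a b], y as [a' b'], z as [c d]; simpl; unfold cd_sub.
  rewrite !cd_conj_add, !(proj1 (IH _ _ _)), !(proj2 (IH _ _ _)), !cd_opp_add_distr.
  split; f_equal; apply cd_add_add_swap_middle.
Qed.

Lemma cd_mul_add_distr_r {v} (x y z : CD v) :
  cd_mul v (cd_add v x y) z = cd_add v (cd_mul v x z) (cd_mul v y z).
Proof. apply cd_mul_add_distr. Qed.

Lemma cd_mul_add_distr_l {v} (x y z : CD v) :
  cd_mul v z (cd_add v x y) = cd_add v (cd_mul v z x) (cd_mul v z y).
Proof. apply cd_mul_add_distr. Qed.

Lemma cd_mul_scale {v} (r : R) (x y : CD v) :
  cd_mul v (cd_scale v r x) y = cd_scale v r (cd_mul v x y) /\
  cd_mul v x (cd_scale v r y) = cd_scale v r (cd_mul v x y).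
Proof.
  revert r; induction v as [|w IH]; intros r; simpl; [split; ring |].
  destruct x as [a b], y as [c d]; simpl; unfold cd_sub.
  rewrite !cd_conj_scale, !(proj1 (IH _ _ _)), !(proj2 (IH _ _ _)),
    !cd_scale_add_distr_l, !cd_scale_opp.
  split; reflexivity.
Qed.

Lemma cd_mul_scale_l {v} (r : R) (x y : CD v) :
  cd_mul v (cd_scale v r x) y = cd_scale v r (cd_mul v x y).
Proof. apply cd_mul_scale. Qed.

Lemma cd_mul_scale_r {v} (r : R) (x y : CD v) :
  cd_mul v x (cd_scale v r y) = cd_scale v r (cd_mul v x y).
Proof. apply cd_mul_scale. Qed.

Lemma cd_mul_opp_l {v} (x y : CD v) : cd_mul v (cd_opp v x) y = cd_opp v (cd_mul v x y).
Proof. rewrite !cd_opp_eq_scale_m1; apply cd_mul_scale_l. Qed.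

Lemma cd_mul_opp_r {v} (x y : CD v) : cd_mul v x (cd_opp v y) = cd_opp v (cd_mul v x y).
Proof. rewrite !cd_opp_eq_scale_m1; apply cd_mul_scale_r. Qed.

Lemma cd_conj_mul {v} (x y : CD v) :
  cd_conj v (cd_mul v x y) = cd_mul v (cd_conj v y) (cd_conj v x).
Proof.
  induction v as [|w IH]; simpl; [ring |].
  destruct x as [a b], y as [c d]; simpl; unfold cd_sub.
  rewrite !cd_conj_add, !cd_conj_opp, !IH, !cd_conj_involutive, cd_opp_add_distr,
    !cd_mul_opp_l, !cd_mul_opp_r, !cd_opp_involutive.
  f_equal; apply cd_add_comm.
Qed.

Lemma cd_re_add {v} (x y : CD v) : cd_re v (cd_add v x y) = cd_re v x + cd_re v y.
Proof. induction v as [|w IH]; simpl; [ring | apply IH]. Qed.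

Lemma cd_re_scale {v} (r : R) (x : CD v) : cd_re v (cd_scale v r x) = r * cd_re v x.
Proof. induction v as [|w IH]; simpl; [ring | apply IH]. Qed.

Lemma cd_add_conj {v} (x : CD v) :
  cd_add v x (cd_conj v x) = cd_real v (2 * cd_re v x).
Proof.
  induction v as [|w IH]; simpl; [ring |].
  destruct x; simpl; rewrite IH, cd_add_opp_r; reflexivity.
Qed.

Lemma cd_conj_imag {v} (x : CD v) : cd_imag v x -> cd_conj v x = cd_opp v x.
Proof.
  intros Hx; apply cd_add_opp_r_uniq.
  rewrite cd_add_conj, Hx, Rmult_0_r; reflexivity.
Qed.

Lemma cd_mul_anticomm {v} (x y : CD v) :
  cd_imag v x -> cd_imag v y -> cd_dot v x y = 0 ->
  cd_mul v y x = cd_opp v (cd_mul v x y).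
Proof.
  intros Hx Hy Hxy.
  assert (Hsum : cd_add v (cd_opp v (cd_mul v x y)) (cd_opp v (cd_mul v y x))
                 = cd_real v 0).
  { pose proof (cd_add_conj (cd_mul v x (cd_conj v y))) as H.
    unfold cd_dot in Hxy.
    rewrite Hxy, Rmult_0_r, cd_conj_mul, cd_conj_involutive, (cd_conj_imag x Hx),
      (cd_conj_imag y Hy), !cd_mul_opp_r in H.
    exact H. }
  apply cd_add_opp_r_uniq in Hsum.
  rewrite <- (cd_opp_involutive (cd_mul v y x)), Hsum, cd_opp_involutive.
  reflexivity.
Qed.

Lemma cd_comm_add_l {v} (x y z : CD v) :
  cd_comm v (cd_add v x y) z = cd_add v (cd_comm v x z) (cd_comm v y z).
Proof.
  unfold cd_comm, cd_sub.
  rewrite cd_mul_add_distr_r, cd_mul_add_distr_l, cd_opp_add_distr.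
  apply cd_add_add_swap_middle.
Qed.

Lemma cd_comm_add_r {v} (x y z : CD v) :
  cd_comm v z (cd_add v x y) = cd_add v (cd_comm v z x) (cd_comm v z y).
Proof.
  unfold cd_comm, cd_sub.
  rewrite cd_mul_add_distr_r, cd_mul_add_distr_l, cd_opp_add_distr.
  apply cd_add_add_swap_middle.
Qed.

Lemma cd_comm_scale_l {v} (r : R) (x y : CD v) :
  cd_comm v (cd_scale v r x) y = cd_scale v r (cd_comm v x y).
Proof.
  unfold cd_comm, cd_sub.
  rewrite cd_mul_scale_l, cd_mul_scale_r, cd_scale_add_distr_l, cd_scale_opp.
  reflexivity.
Qed.

Lemma cd_comm_scale_r {v} (r : R) (x y : CD v) :
  cd_comm v x (cd_scale v r y) = cd_scale v r (cd_comm v x y).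
Proof.
  unfold cd_comm, cd_sub.
  rewrite cd_mul_scale_l, cd_mul_scale_r, cd_scale_add_distr_l, cd_scale_opp.
  reflexivity.
Qed.

Lemma cd_comm_real_l {v} (r : R) (x : CD v) : cd_comm v (cd_real v r) x = cd_real v 0.
Proof. unfold cd_comm, cd_sub; rewrite cd_mul_real_l, cd_mul_real_r; apply cd_add_opp_r. Qed.

Lemma cd_comm_real_r {v} (r : R) (x : CD v) : cd_comm v x (cd_real v r) = cd_real v 0.
Proof. unfold cd_comm, cd_sub; rewrite cd_mul_real_l, cd_mul_real_r; apply cd_add_opp_r. Qed.

Lemma cd_comm_same {v} (x : CD v) : cd_comm v x x = cd_real v 0.
Proof. apply cd_add_opp_r. Qed.

Lemma cd_comm_anticomm {v} (x y : CD v) :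
  cd_mul v y x = cd_opp v (cd_mul v x y) ->
  cd_comm v x y = cd_scale v 2 (cd_mul v x y).
Proof.
  intros Hyx; unfold cd_comm, cd_sub.
  rewrite Hyx, cd_opp_involutive, <- (cd_scale_1 (cd_mul v x y)).
  rewrite <- cd_scale_add_distr_r, cd_scale_assoc; f_equal; ring.
Qed.

Lemma cd_comm_exp {v} (M N : CD v) :
  cd_comm v (cd_exp v M) (cd_exp v N) =
  cd_scale v (sinc (cd_norm v M) * sinc (cd_norm v N)) (cd_comm v M N).
Proof.
  unfold cd_exp.
  rewrite cd_comm_add_l, !cd_comm_add_r, cd_comm_real_l, cd_comm_real_l,
    cd_comm_real_r, !cd_add_0_l, cd_comm_scale_l, cd_comm_scale_r, cd_scale_assoc.
  reflexivity.
Qed.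

Theorem lemma9 (v : nat) (M N N1 N2 : CD v) (beta : R) :
  (2 <= v)%nat ->
  cd_imag v M -> cd_imag v N ->
  N = cd_add v N1 N2 ->
  N1 = cd_scale v beta M ->
  cd_dot v M N2 = 0 ->
  cd_comm v (cd_exp v M) (cd_exp v N) =
  cd_scale v (2 * sinc (cd_norm v M) * sinc (cd_norm v N)) (cd_mul v M N2).
Proof.
  intros _ HM HN HN12 HN1 Hdot.
  assert (HN2 : cd_imag v N2).
  { unfold cd_imag in *.
    rewrite HN12, HN1, cd_re_add, cd_re_scale, HM in HN; lra. }
  assert (HMN : cd_comm v M N = cd_comm v M N2).
  { rewrite HN12, HN1, cd_comm_add_r, cd_comm_scale_r, cd_comm_same, cd_scale_real,
      Rmult_0_r.
    apply cd_add_0_l. }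
  rewrite cd_comm_exp, HMN, (cd_comm_anticomm M N2 (cd_mul_anticomm M N2 HM HN2 Hdot)),
    cd_scale_assoc.
  f_equal; ring.
Qed.
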